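(* Let $A\in\mathbb{R}^{N\times N}$ be invertible and equilibrated in the $L^2$ norm (every row of $A$ has Euclidean norm $1$), and suppose $AA^T$ has at most $K$ nonzero elements in every row. Then for any invertible diagonal matrix $G\in\mathbb{R}^{N\times N}$, $$\kappa(A)=\|A\|_2\|A^{-1}\|_{S^4}\le\sqrt K\,\|G^{-1}A\|_2\|A^{-1}G\|_{S^4}=\sqrt K\,\kappa(G^{-1}A).$$
   Context: For invertible $B$, $\kappa(B):=\|B\|_2\|B^{-1}\|_{S^4}$, where $\|\cdot\|_2$ is the spectral norm and $\|M\|_{S^4}:=\left(\sum_n s_n^4\right)^{1/4}$ with $s_n$ the singular values of $M$. *)

From HB Require Import structures.
From mathcomp Require Import all_boot all_order all_algebra.
From mathcomp Require Import classical_sets boolp reals.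
Set Implicit Arguments. Unset Strict Implicit. Unset Printing Implicit Defensive.
Import Order.TTheory GRing.Theory Num.Theory.
Local Open Scope ring_scope.
Local Open Scope classical_set_scope.

Definition vnorm {R : realType} {N : nat} (v : 'cV[R]_N) : R :=
  Num.sqrt (\sum_(i < N) v i 0 ^+ 2).

Definition spec_norm {R : realType} {N : nat} (B : 'M[R]_N) : R :=
  sup [set vnorm (B *m x) | x in [set x : 'cV[R]_N | vnorm x = 1]].

Definition is_sing_vals {R : realType} {N : nat} (M : 'M[R]_N) (s : 'rV[R]_N) : Prop :=
  (forall i, 0 <= s 0 i) /\
  exists U V : 'M[R]_N, U^T *m U = 1%:M /\ V^T *m V = 1%:M /\
    M = U *m diag_mx s *m V^T.

Definition sing_vals {R : realType} {N : nat} (M : 'M[R]_N) : 'rV[R]_N :=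
  xget 0 (is_sing_vals M).

Definition schatten4 {R : realType} {N : nat} (M : 'M[R]_N) : R :=
  Num.sqrt (Num.sqrt (\sum_(i < N) (sing_vals M 0 i) ^+ 4)).

Definition kappa {R : realType} {N : nat} (B : 'M[R]_N) : R :=
  spec_norm B * schatten4 (invmx B).

(** First, [|A|_2 <= sqrt K]: by Cauchy-Schwarz the
    entries of [A A^T] lie in [[-1, 1]], so with at most [K] nonzero entries per
    row its quadratic form is at most [K |y|^2] (bound [2 y_i m y_k] by
    [y_i^2 + y_k^2] on the support), and [|A x|^4 = <A^T y, x>^2 <= <A A^T y, y>]
    for [y = A x].  Second, write [G^-1 = diag h]; applying [G^-1 A] to the i-th
    row of [A], a unit vector, gives [|h_i| <= |G^-1 A|_2].  Since
    [|M|_(S^4)^4 = |M^T M|_F^2], right multiplication by [diag h] scales the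
    Schatten-4 norm by at most [max_i |h_i|], and [A^-1 = (A^-1 G) diag h].
    The formula for the Schatten norm needs an SVD, which comes from the real
    spectral theorem for [M^T M], proved by induction using a real eigenvector
    and a Householder reflection. *)

From HB Require Import structures.
From mathcomp Require Import all_boot all_order all_algebra.
From mathcomp Require Import classical_sets boolp reals.
From mathcomp Require Import ring lra complex.
Import Order.TTheory GRing.Theory Num.Theory.
Local Open Scope ring_scope.
Set Implicit Arguments. Unset Strict Implicit. Unset Printing Implicit Defensive.

Lemma row_unitmx_neq0 (R : comUnitRingType) n (A : 'M[R]_n) i :
  A \in unitmx -> row i A != 0.
Proof.
move=> Au; apply/eqP => /(congr1 (mulmx^~ (invmx A))).
rewrite rowE -mulmxA mulmxV // mulmx1 mul0mx => /rowP/(_ i).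
by rewrite !mxE !eqxx /=; apply/eqP; rewrite oner_neq0.
Qed.

Lemma col_unitmx_neq0 (R : comUnitRingType) n (A : 'M[R]_n) i :
  A \in unitmx -> col i A != 0.
Proof.
by rewrite -unitmx_tr -(inj_eq (@trmx_inj _ _ _)) tr_col trmx0; apply: row_unitmx_neq0.
Qed.

Lemma invmx_mul (R : comUnitRingType) n (A B : 'M[R]_n) :
  A \in unitmx -> B \in unitmx -> invmx (A *m B) = invmx B *m invmx A.
Proof.
move=> Au Bu; have ABu : A *m B \in unitmx by rewrite unitmx_mul Au Bu.
by rewrite -[RHS](mulKmx ABu) [_ *m (invmx B *m _)]mulmxA mulmxK // mulmxV // mulmx1.
Qed.

Lemma invmx_diag (F : fieldType) n (d : 'rV[F]_n) : diag_mx d \in unitmx ->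
  invmx (diag_mx d) = diag_mx (\row_i (d 0 i)^-1).
Proof.
move=> du; have /prodf_neq0 d_neq0 : \prod_i d 0 i != 0 by rewrite -det_diag -unitfE -unitmxE.
rewrite -[RHS](mulKmx du) mulmx_diag (_ : diag_mx _ = 1%:M) ?mulmx1 //.
by apply/matrixP => i j; rewrite !mxE; case: (i == j); rewrite /= ?mulr0n ?mulr1n ?divff ?d_neq0.
Qed.

Lemma symmetric_eigen_block (R : pzRingType) n (T : 'M[R]_(1 + n)) a :
  T^T = T -> T *m col_mx 1%:M 0 = a *: col_mx 1%:M 0 ->
  T = block_mx a%:M 0 0 (drsubmx T).
Proof.
rewrite -{1 2 3}[T]submxK tr_block_mx mul_block_col !mulmx1 !mulmx0 !addr0.
rewrite scale_col_mx scalemx1 => /eq_block_mx [_ Tur _ _] /eq_col_mx [Tul Tdl].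
by rewrite -[LHS]submxK Tul -Tur Tdl scaler0 trmx0.
Qed.

Section SumsOfSquares.
Variable R : realDomainType.

Lemma tr_mulmx00 n (u v : 'cV[R]_n) : (u^T *m v) 0 0 = \sum_i u i 0 * v i 0.
Proof. by rewrite mxE; apply: eq_bigr => i _; rewrite mxE. Qed.

Lemma tr_mulmx_self_gt0 n (v : 'cV[R]_n) : v != 0 -> 0 < (v^T *m v) 0 0.
Proof.
move=> vn0; rewrite tr_mulmx00 lt_def sumr_ge0 ?andbT => [|j _]; last first.
  by rewrite -expr2 sqr_ge0.
apply: contra vn0; rewrite psumr_eq0 => [/allP v0|j _]; last by rewrite -expr2 sqr_ge0.
apply/eqP/colP => j; have /implyP/(_ isT) := v0 j (mem_index_enum j).
by rewrite mxE -expr2 sqrf_eq0 => /eqP.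
Qed.

Lemma sum_mul_sqr_le n (a b : 'I_n -> R) :
  (\sum_i a i * b i) ^+ 2 <= (\sum_i a i ^+ 2) * (\sum_i b i ^+ 2).
Proof.
rewrite expr2 !mulr_suml; under eq_bigr do rewrite mulr_sumr.
under [X in _ <= X]eq_bigr do rewrite mulr_sumr.
set L := \sum_i _; set S := \sum_i _.
have SE : S = \sum_i \sum_j a j ^+ 2 * b i ^+ 2 by rewrite /S exchange_big.
suff : L + L <= S + S by lra.
rewrite {2}SE /L /S -!big_split /=; apply: ler_sum => i _.
rewrite -!big_split /=; apply: ler_sum => j _.
by have := sqr_ge0 (a i * b j - a j * b i); nra.
Qed.

Lemma sparse_quad_form_le n (K : nat) (M : 'M[R]_n) (y : 'I_n -> R) :
  M^T = M -> (forall i k, `|M i k| <= 1) ->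
  (forall i, #|[set k | M i k != 0%R]| <= K)%N ->
  \sum_i \sum_k y i * M i k * y k <= K%:R * \sum_i y i ^+ 2.
Proof.
move=> Msym M1 Msupp.
pose c i k : R := (M i k != 0)%:R.
have c_sym i k : c i k = c k i by rewrite /c -{1}Msym mxE.
have term i k : 2 * (y i * M i k * y k) <= c i k * y i ^+ 2 + c k i * y k ^+ 2.
  rewrite [c k i]c_sym /c -mulrDr; have [->|_] := eqVneq (M i k) 0.
    by rewrite /= !(mulr0, mul0r).
  have M2 : 0 <= 1 - M i k ^+ 2.
    by rewrite subr_ge0 -real_normK ?num_real // expr_le1 ?normr_ge0.
  have := mulr_ge0 M2 (sqr_ge0 (y k)); have := sqr_ge0 (y i - M i k * y k).
  by rewrite mul1r; nra.
have row_c i : \sum_k c i k = #|[set k | M i k != 0%R]|%:R.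
  rewrite -sumr_const [RHS]big_mkcond /=; apply: eq_bigr => k _.
  by rewrite inE /c; case: (M i k != 0).
suff : 2 * \sum_i \sum_k y i * M i k * y k <= 2 * (K%:R * \sum_i y i ^+ 2) by lra.
rewrite !mulr_sumr.
apply: (@le_trans _ _ (\sum_i \sum_k (c i k * y i ^+ 2 + c k i * y k ^+ 2))).
  by apply: ler_sum => i _; rewrite mulr_sumr; apply: ler_sum => k _; apply: term.
under eq_bigr do rewrite big_split /=.
rewrite big_split /= [X in _ + X]exchange_big -big_split /=; apply: ler_sum => i _.
have : #|[set k | M i k != 0%R]|%:R <= K%:R :> R by rewrite ler_nat.
move=> /(ler_wpM2r (sqr_ge0 (y i))).
by rewrite -mulr_suml row_c; lra.
Qed.

End SumsOfSquares.

Section Reflection.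
Variable R : realFieldType.

(* Since [2 / 0 = 0], [reflmx 0 = 1], so no nondegeneracy hypotheses are needed. *)
Definition reflmx m (w : 'cV[R]_m) : 'M[R]_m :=
  1%:M - (2 / (w^T *m w) 0 0) *: (w *m w^T).

Lemma trmx_reflmx m (w : 'cV[R]_m) : (reflmx w)^T = reflmx w.
Proof. by rewrite /reflmx linearB /= trmx1 linearZ /= trmx_mul trmxK. Qed.

Lemma reflmx_orthogonal m (w : 'cV[R]_m) : (reflmx w)^T *m reflmx w = 1%:M.
Proof.
rewrite trmx_reflmx /reflmx; set t := (w^T *m w) 0 0; set c := 2 / t.
have ww : w^T *m w = t%:M by rewrite [LHS]mx11_scalar.
have cct : c * (c * t) = 2 * c.
  rewrite /c; have [->|tn0] := eqVneq t 0; first by rewrite invr0 !mulr0.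
  by field.
rewrite mulmxBl !mulmxBr !mul1mx !mulmx1 -!scalemxAl -!scalemxAr.
rewrite mulmxA -(mulmxA w) ww mul_mx_scalar -scalemxAl !scalerA cct.
by apply/matrixP => i j; rewrite !mxE; ring.
Qed.

Lemma reflmx_swap m (u v : 'cV[R]_m) : u^T *m u = v^T *m v -> reflmx (u - v) *m v = u.
Proof.
move=> uuvv; rewrite /reflmx; set w := u - v.
have [w0|wn0] := eqVneq w 0.
  by rewrite w0 mul0mx scaler0 subr0 mul1mx; apply/esym/eqP; rewrite -subr_eq0 -/w w0.
set t := (w^T *m w) 0 0.
have vu : v^T *m u = u^T *m v.
  by rewrite -[LHS]trmxK trmx_mul trmxK [u^T *m v]mx11_scalar tr_scalar_mx.
have tE : t = 2 * ((v^T *m v) 0 0 - (u^T *m v) 0 0).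
  by rewrite /t /w [(u - v)^T]linearB /= mulmxBl !mulmxBr uuvv vu !mxE; ring.
have wv : w^T *m v = ((u^T *m v) 0 0 - (v^T *m v) 0 0)%:M.
  rewrite [LHS]mx11_scalar /w [(u - v)^T]linearB /= mulmxBl.
  by apply/matrixP => i j; rewrite !mxE.
have tn0 : t != 0 by rewrite gt_eqF // tr_mulmx_self_gt0.
rewrite mulmxBl mul1mx -scalemxAl -mulmxA wv mul_mx_scalar scalerA.
have -> : 2 / t * ((u^T *m v) 0 0 - (v^T *m v) 0 0) = -1.
  have : (v^T *m v) 0 0 - (u^T *m v) 0 0 != 0.
    by move: tn0; rewrite tE mulf_eq0 negb_or => /andP[].
  by rewrite tE => ?; field.
by rewrite scaleN1r opprK /w addrC subrK.
Qed.

End Reflection.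

Section Spectral.
Variable R : rcfType.

Lemma symmetric_eigenvalue n (P : 'M[R]_n.+1) : P^T = P -> exists a, eigenvalue P a.
Proof.
move=> Psym; pose f : {rmorphism R -> R[i]} := real_complex R; pose Q := map_mx f P.
have Qherm : Q \is hermsymmx.
  apply: realsym_hermsym.
    by apply/is_hermitianmxP; rewrite expr0 scale1r map_mx_id // /Q map_trmx Psym.
  by apply/mxOverP => i j; rewrite mxE; apply/complex_realP; eexists.
have /orthomx_spectralP QE := hermitian_normalmx Qherm.
have /complex_realP [a da] := mxOverP (hermitian_spectral_diag_real Qherm) 0 0.
exists a; rewrite -(eigenvalue_map f) (_ : f a = spectral_diag Q 0 0) ?da //.
apply/eigenvalueP; exists (row 0 (spectralmx Q)); last first.
  by apply: row_unitmx_neq0; apply: spectral_unit.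
have : spectralmx Q *m Q = diag_mx (spectral_diag Q) *m spectralmx Q.
  by rewrite [X in _ *m X = _]QE !mulmxA mulmxV ?spectral_unit ?mul1mx.
by move=> /(congr1 (row 0)); rewrite !row_mul row_diag_mx -scalemxAl -rowE da.
Qed.

Lemma symmetric_unit_eigenvector n (P : 'M[R]_n.+1) : P^T = P ->
  exists a (u : 'cV[R]_n.+1), u^T *m u = 1%:M /\ P *m u = a *: u.
Proof.
move=> Psym; have [a /eigenvalueP [v vP vn0]] := symmetric_eigenvalue Psym.
have t_gt0 : 0 < (v *m v^T) 0 0.
  rewrite -[X in X *m _]trmxK tr_mulmx_self_gt0 //.
  by apply: contra vn0 => /eqP v0; rewrite -[v]trmxK v0 trmx0.
set c := (Num.sqrt ((v *m v^T) 0 0))^-1.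
exists a, (c *: v^T); split.
  rewrite [(c *: _)^T]linearZ /= trmxK -scalemxAl -scalemxAr scalerA [v *m _]mx11_scalar.
  by rewrite -scalemx1 scalerA -expr2 exprVn sqr_sqrtr ?ltW // mulVf ?gt_eqF ?scale1r.
by rewrite -scalemxAr -{1}Psym -trmx_mul vP [(a *: v)^T]linearZ scalerA mulrC -scalerA.
Qed.

Theorem symmetric_spectral n (P : 'M[R]_n) : P^T = P ->
  exists Q (d : 'rV[R]_n), Q^T *m Q = 1%:M /\ P = Q *m diag_mx d *m Q^T.
Proof.
elim: n P => [|n IH] P Psym.
  exists 1%:M, 0; split; first by rewrite trmx1 mul1mx.
  by apply/matrixP => -[].
have [a [u [uu Pu]]] := symmetric_unit_eigenvector Psym.
pose e : 'cV[R]_(1 + n) := col_mx 1%:M 0.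
have ee : e^T *m e = 1%:M.
  by rewrite /e tr_col_mx mul_row_col trmx1 mul1mx trmx0 mul0mx addr0.
pose H := reflmx (u - e).
have HH : H^T *m H = 1%:M := reflmx_orthogonal _.
have He : H *m e = u := reflmx_swap (etrans uu (esym ee)).
pose T : 'M[R]_(1 + n) := H^T *m P *m H.
have Tsym : T^T = T by rewrite /T !trmx_mul trmxK Psym mulmxA.
have Te : T *m e = a *: e.
  by rewrite /T -!mulmxA He Pu -scalemxAr -He mulmxA HH mul1mx.
have TE := symmetric_eigen_block Tsym Te.
have [Q1 [d1 [Q1Q1 SE]]] := IH _ (etrans (trmx_drsub T) (congr1 drsubmx Tsym)).
pose B : 'M[R]_(1 + n) := block_mx 1%:M 0 0 Q1.
have BB : B^T *m B = 1%:M.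
  rewrite /B tr_block_mx mulmx_block !trmx0 trmx1 !mul0mx !mulmx0 !mul1mx.
  by rewrite !addr0 !add0r Q1Q1 -scalar_mx_block.
exists (H *m B), (row_mx a%:M d1); split.
  by rewrite trmx_mul -mulmxA (mulmxA H^T) HH mul1mx BB.
have HHT : H *m H^T = 1%:M := mulmx1C HH.
have -> : P = H *m T *m H^T by rewrite /T !mulmxA HHT mul1mx -mulmxA HHT mulmx1.
suff -> : T = B *m diag_mx (row_mx a%:M d1) *m B^T by rewrite trmx_mul !mulmxA.
rewrite TE SE /B diag_mx_row tr_block_mx !trmx0 trmx1 !mulmx_block.
rewrite !mul0mx !mulmx0 !mul1mx !mulmx1 !addr0 !add0r mul0mx.
by congr block_mx; apply/matrixP => i j; rewrite !ord1 !mxE.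
Qed.

End Spectral.

Section Norms.
Variable R : realType.

Lemma sqr_vnorm n (v : 'cV[R]_n) : vnorm v ^+ 2 = \sum_i v i 0 ^+ 2.
Proof. by rewrite sqr_sqrtr // sumr_ge0 // => i _; rewrite sqr_ge0. Qed.

Lemma vnorm1P n (v : 'cV[R]_n) : vnorm v = 1 <-> \sum_i v i 0 ^+ 2 = 1.
Proof.
split=> [v1|s1]; first by rewrite -sqr_vnorm v1 expr1n.
by rewrite /vnorm s1 sqrtr1.
Qed.

Lemma abs_le_vnorm n (v : 'cV[R]_n) i : `|v i 0| <= vnorm v.
Proof.
rewrite -sqrtr_sqr ler_sqrt ?sumr_ge0 // => [|j _]; last by rewrite sqr_ge0.
by rewrite (bigD1 i) //= lerDl sumr_ge0 // => j _; rewrite sqr_ge0.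
Qed.

Definition frobenius_sq n (B : 'M[R]_n) := \sum_i \sum_j B i j ^+ 2.

Lemma frobenius_sq_ge0 n (B : 'M[R]_n) : 0 <= frobenius_sq B.
Proof. by do 2!(apply: sumr_ge0 => ? _); rewrite sqr_ge0. Qed.

Lemma vnorm_mul_le_frobenius n (B : 'M[R]_n) x :
  vnorm x = 1 -> vnorm (B *m x) <= Num.sqrt (frobenius_sq B).
Proof.
move=> /vnorm1P x1; rewrite ler_sqrt ?frobenius_sq_ge0 //; apply: ler_sum => i _.
by rewrite mxE; apply: le_trans (sum_mul_sqr_le _ _) _; rewrite x1 mulr1.
Qed.

Definition spec_norm_set n (B : 'M[R]_n) :=
  [set vnorm (B *m x) | x in [set x : 'cV[R]_n | vnorm x = 1]]%classic.

Lemma vnorm_mul_le_spec_norm n (B : 'M[R]_n) x :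
  vnorm x = 1 -> vnorm (B *m x) <= spec_norm B.
Proof.
move=> x1; apply: (ub_le_sup _ (ex_intro2 _ _ x x1 erefl)).
by exists (Num.sqrt (frobenius_sq B)) => _ [y /= y1 <-]; apply: vnorm_mul_le_frobenius.
Qed.

Lemma spec_norm_le n (B : 'M[R]_n) c : 0 <= c ->
  (forall x, vnorm x = 1 -> vnorm (B *m x) <= c) -> spec_norm B <= c.
Proof.
move=> c0 Bc; rewrite /spec_norm -/(spec_norm_set B).
have [->|ne] := eqVneq (spec_norm_set B) set0%classic; first by rewrite sup0.
by apply: ge_sup; [apply/set0P | move=> _ [x /= x1 <-]; apply: Bc].
Qed.

Lemma spec_norm_ge0 n (B : 'M[R]_n) : 0 <= spec_norm B.
Proof.
rewrite /spec_norm -/(spec_norm_set B).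
have [->|/set0P [_ [x /= x1 _]]] := eqVneq (spec_norm_set B) set0%classic.
  by rewrite sup0.
exact: le_trans (sqrtr_ge0 _) (vnorm_mul_le_spec_norm B x1).
Qed.

Lemma unitmx_sing_vals n (M : 'M[R]_n) : M \in unitmx -> exists s, is_sing_vals M s.
Proof.
move=> Mu; have MMsym : (M^T *m M)^T = M^T *m M by rewrite trmx_mul trmxK.
have [Q [d [QQ MME]]] := symmetric_spectral MMsym.
have QQT : Q *m Q^T = 1%:M := mulmx1C QQ.
pose Y := M *m Q.
have YY : Y^T *m Y = diag_mx d.
  by rewrite /Y trmx_mul -mulmxA (mulmxA M^T) MME !mulmxA QQ mul1mx -mulmxA QQ mulmx1.
have d_gt0 i : 0 < d 0 i.
  have Yu : Y \in unitmx by rewrite unitmx_mul Mu (mulmx1_unit QQ).2.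
  have := tr_mulmx_self_gt0 (col_unitmx_neq0 i Yu).
  have -> : ((col i Y)^T *m col i Y) 0 0 = (Y^T *m Y) i i.
    by rewrite !mxE; apply: eq_bigr => k _; rewrite !mxE.
  by rewrite YY mxE eqxx mulr1n.
pose s := \row_i Num.sqrt (d 0 i).
exists s; split=> [i|]; first by rewrite mxE sqrtr_ge0.
have sqrt_d_neq0 i : Num.sqrt (d 0 i) != 0 by rewrite gt_eqF ?sqrtr_gt0.
exists (Y *m diag_mx (\row_i (s 0 i)^-1)), Q; split; [|split=> //].
  rewrite trmx_mul tr_diag_mx -mulmxA (mulmxA Y^T) YY !mulmx_diag.
  apply/matrixP => i j; rewrite !mxE; case: (i == j); rewrite /= ?mulr0n ?mulr1n //.
  have := sqrt_d_neq0 i; set r := Num.sqrt _ => rn0.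
  by rewrite -[d 0 i](sqr_sqrtr (ltW (d_gt0 i))) -/r; field.
rewrite -(mulmxA Y) mulmx_diag (_ : diag_mx _ = 1%:M) ?mulmx1.
  by rewrite /Y -mulmxA QQT mulmx1.
by apply/matrixP => i j; rewrite !mxE; case: (i == j); rewrite /= ?mulr0n ?mulr1n // mulVf.
Qed.

Lemma sing_vals_sum4 n (M : 'M[R]_n) s :
  is_sing_vals M s -> \sum_i s 0 i ^+ 4 = frobenius_sq (M^T *m M).
Proof.
move=> [_ [U [V [UU [VV ->]]]]].
have -> : (U *m diag_mx s *m V^T)^T *m (U *m diag_mx s *m V^T)
    = V *m diag_mx (\row_i (s 0 i ^+ 2)) *m V^T.
  rewrite !trmx_mul trmxK tr_diag_mx !mulmxA -(mulmxA _ U^T) UU mulmx1.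
  by rewrite -(mulmxA V (diag_mx s)) mulmx_diag; congr (_ *m diag_mx _ *m _).
set C := V *m _ *m V^T.
have -> : frobenius_sq C = \tr (C *m C^T).
  rewrite /frobenius_sq /mxtrace; apply: eq_bigr => i _; rewrite mxE.
  by apply: eq_bigr => j _; rewrite [C^T j i]mxE expr2.
rewrite /C !trmx_mul trmxK tr_diag_mx !mulmxA -(mulmxA _ V^T) VV mulmx1.
rewrite -(mulmxA V) mulmx_diag mxtrace_mulC mulmxA VV mul1mx mxtrace_diag.
by apply: eq_bigr => i _; rewrite !mxE -exprD.
Qed.

(* [sing_vals] is an [xget] choice, meaningful only once an SVD is known to exist. *)
Lemma schatten4E n (M : 'M[R]_n) :
  M \in unitmx -> schatten4 M = Num.sqrt (Num.sqrt (frobenius_sq (M^T *m M))).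
Proof.
by move=> /unitmx_sing_vals/(xgetPex 0)/sing_vals_sum4; rewrite /schatten4 => <-.
Qed.

Lemma spec_norm_le_sqrt_row_support n (K : nat) (A : 'M[R]_n) :
  (forall i, \sum_j A i j ^+ 2 = 1) ->
  (forall i, #|[set j | (A *m A^T) i j != 0%R]| <= K)%N ->
  spec_norm A <= Num.sqrt K%:R.
Proof.
move=> rowA suppA; apply: spec_norm_le => [|x /vnorm1P x1]; first exact: sqrtr_ge0.
set M := A *m A^T; set y := A *m x; set Y := \sum_i y i 0 ^+ 2.
have Msym : M^T = M by rewrite /M trmx_mul trmxK.
have M1 i k : `|M i k| <= 1.
  rewrite -sqrtr_sqr -sqrtr1 ler_sqrt // mxE.
  under eq_bigr do rewrite [A^T _ _]mxE.
  by apply: le_trans (sum_mul_sqr_le _ _) _; rewrite !rowA mulr1.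
have YE : Y = ((A^T *m y)^T *m x) 0 0.
  rewrite trmx_mul trmxK -mulmxA tr_mulmx00.
  by apply: eq_bigr => i _; rewrite expr2.
have ZE : ((A^T *m y)^T *m (A^T *m y)) 0 0 = \sum_i \sum_k y i 0 * M i k * y k 0.
  rewrite trmx_mul trmxK mulmxA -(mulmxA y^T) -/M mxE exchange_big /=.
  apply: eq_bigr => k _; rewrite mxE mulr_suml.
  by apply: eq_bigr => i _; rewrite mxE.
have YK : Y ^+ 2 <= K%:R * Y.
  apply: le_trans (sparse_quad_form_le (fun i => y i 0) Msym M1 suppA).
  rewrite -ZE tr_mulmx00 YE tr_mulmx00.
  by apply: le_trans (sum_mul_sqr_le _ _) _; rewrite x1 mulr1; under eq_bigr do rewrite expr2.
rewrite /vnorm ler_sqrt ?ler0n // -/Y.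
have Y0 : 0 <= Y by rewrite sumr_ge0 // => i _; rewrite sqr_ge0.
have := ler0n R K; nra.
Qed.

Lemma abs_le_spec_norm_diag_mul n (A : 'M[R]_n) (h : 'rV[R]_n) i :
  (forall i, \sum_j A i j ^+ 2 = 1) -> `|h 0 i| <= spec_norm (diag_mx h *m A).
Proof.
move=> rowA; have x1 : vnorm (row i A)^T = 1.
  by apply/vnorm1P; rewrite -(rowA i); apply: eq_bigr => j _; rewrite !mxE.
apply: le_trans (vnorm_mul_le_spec_norm _ x1).
rewrite (_ : h 0 i = (diag_mx h *m A *m (row i A)^T) i 0); first exact: abs_le_vnorm.
rewrite mul_diag_mx mxE -[LHS]mulr1 -(rowA i) mulr_sumr.
by apply: eq_bigr => j _; rewrite !mxE -mulrA -expr2.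
Qed.

Lemma schatten4_mul_diag_le n (M : 'M[R]_n) (h : 'rV[R]_n) c :
  M \in unitmx -> M *m diag_mx h \in unitmx -> 0 <= c ->
  (forall i, `|h 0 i| <= c) -> schatten4 (M *m diag_mx h) <= c * schatten4 M.
Proof.
move=> Mu MDu c0 hc; rewrite !schatten4E //.
have -> : c = Num.sqrt (Num.sqrt (c ^+ 4)).
  by rewrite -[4%N]/(2 * 2)%N exprM sqrtr_sqr ger0_norm ?sqr_ge0 // sqrtr_sqr ger0_norm.
rewrite -!sqrtrM ?sqrtr_ge0 ?exprn_ge0 // ler_sqrt ?mulr_ge0 ?sqrtr_ge0 ?exprn_ge0 //.
rewrite ler_sqrt ?mulr_ge0 ?frobenius_sq_ge0 ?exprn_ge0 // /frobenius_sq.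
rewrite trmx_mul tr_diag_mx !mulmxA -(mulmxA _ M^T) mulr_sumr; apply: ler_sum => i _.
rewrite mulr_sumr; apply: ler_sum => j _; rewrite mul_mx_diag mxE mul_diag_mx mxE.
have hc2 k : h 0 k ^+ 2 <= c ^+ 2.
  by rewrite -real_normK ?num_real // lerXn2r ?nnegrE ?normr_ge0.
rewrite exprMn exprMn (_ : c ^+ 4 = c ^+ 2 * c ^+ 2); last by rewrite -exprD.
by rewrite mulrAC ler_wpM2r ?sqr_ge0 // ler_pM ?sqr_ge0 ?hc2.
Qed.

End Norms.

Theorem lemma5 (R : realType) (N K : nat) (A G : 'M[R]_N) :
  A \in unitmx ->
  (forall i : 'I_N, \sum_(j < N) A i j ^+ 2 = 1) ->
  (forall i : 'I_N, (#|[set j : 'I_N | (A *m A^T) i j != 0%R]| <= K)%N) ->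
  is_diag_mx G -> G \in unitmx ->
  kappa A = spec_norm A * schatten4 (invmx A) /\
  kappa A <= Num.sqrt (K%:R) * (spec_norm (invmx G *m A) * schatten4 (invmx A *m G)) /\
  Num.sqrt (K%:R) * (spec_norm (invmx G *m A) * schatten4 (invmx A *m G))
    = Num.sqrt (K%:R) * kappa (invmx G *m A).
Proof.
move=> Au rowA suppA /diag_mxP [g ->] Gu.
have AGu : invmx A *m diag_mx g \in unitmx by rewrite unitmx_mul unitmx_inv Au.
split=> //; split; last by rewrite /kappa invmx_mul ?unitmx_inv // invmxK.
rewrite /kappa ler_pM ?spec_norm_ge0 ?sqrtr_ge0 ?spec_norm_le_sqrt_row_support //.
rewrite {1}(_ : invmx A = invmx A *m diag_mx g *m invmx (diag_mx g)); last first.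
  by rewrite mulmxK.
rewrite invmx_diag //; apply: schatten4_mul_diag_le => //.
- by rewrite -invmx_diag // mulmxK // unitmx_inv.
- exact: spec_norm_ge0.
- by move=> i; apply: abs_le_spec_norm_diag_mul.
Qed.
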